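(* Let $\mathbf{A}$ be a fixed finite $\sigma$-structure. The following are equivalent: (1) $\mathrm{CSP}(\mathbf{A})$ is closed under $\equiv_1$-equivalence, i.e. for all $\sigma$-structures $\mathbf{X}_1\equiv_1\mathbf{X}_2$ we have $\mathbf{X}_1\to\mathbf{A}$ iff $\mathbf{X}_2\to\mathbf{A}$; (2) $\mathrm{SA}^1$ decides $\mathrm{CSP}(\mathbf{A})$; (3) $\mathrm{BLP}$ decides $\mathrm{CSP}(\mathbf{A})$; (4) $\mathbf{A}$ has symmetric polymorphisms of all arities.
   Context: A signature $\sigma$ is a finite set of relation symbols with arities $\operatorname{ar}(R)\ge1$; a $\sigma$-structure $\mathbf{A}$ has finite universe $A$ and non-empty relations $R^\mathbf{A}\subseteq A^{\operatorname{ar}(R)}$. For a tuple $\mathbf{a}$, $a_i$ is its $i$-th entry, $\{\mathbf{a}\}$ its set of entries. $\mathbf{X}\to\mathbf{A}$ means there is a homomorphism, i.e. $h:X\to A$ with $h(\mathbf{x})\in R^\mathbf{A}$ for all $\mathbf{x}\in R^\mathbf{X}$. $\mathrm{CSP}(\mathbf{A})$ is the problem of deciding, for an input $\sigma$-structure $\mathbf{X}$, whether $\mathbf{X}\to\mathbf{A}$. Constraints: $\mathcal{C}_\mathbf{A}=\{R(\mathbf{a}):R\in\sigma,\mathbf{a}\in R^\mathbf{A}\}$ (formal symbols). $\equiv_1$: the factor graph of $\mathbf{A}$ is the bipartite graph on $A\cup\mathcal{C}_\mathbf{A}$ with edges $\{a,R(\mathbf{a})\}$ for $a\in\{\mathbf{a}\}$,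 labelled $(\{i:a_i=a\},R)$. $\delta_0^\mathbf{A}(v)$ is one of two fixed symbols according as $v\in A$ or $v\in\mathcal{C}_\mathbf{A}$; $\delta_j^\mathbf{A}(v)=\{\{(\text{label of }\{v,w\},\delta_{j-1}^\mathbf{A}(w)): w \text{ adjacent to } v\}\}$; $\delta^\mathbf{A}(v)=(\delta^\mathbf{A}_j(v))_{j\ge0}$. $\mathbf{A}\equiv_1\mathbf{B}$ iff $\{\{\delta^\mathbf{A}(v): v\in A\cup\mathcal{C}_\mathbf{A}\}\}=\{\{\delta^\mathbf{B}(v): v\in B\cup\mathcal{C}_\mathbf{B}\}\}$. $\mathrm{BLP}(\mathbf{X},\mathbf{A})$: variables $p_x(a)\in[0,1]$ ($x\in X,a\in A$) and $p_{R(\mathbf{x})}(\mathbf{a})\in[0,1]$ ($R(\mathbf{x})\in\mathcal{C}_\mathbf{X}$, $\mathbf{a}\in A^{\operatorname{ar}(R)}$), with $\sum_a p_x(a)=1$; $p_x(a)=\sum_{\mathbf{a}: a_i=a}p_{R(\mathbf{x})}(\mathbf{a})$ for every $R(\mathbf{x})\in\mathcal{C}_\mathbf{X}$, $a\in A$ and $i$ with $x_i=x$; and $p_{R(\mathbf{x})}(\mathbf{a})=0$ if $\mathbf{a}\notin R^\mathbf{A}$. $\mathrm{SA}^1(\mathbf{X},\mathbf{A})$ is $\mathrm{BLP}(\mathbf{X},\mathbf{A})$ plus the constraints $p_{R(\mathbf{x})}(\mathbf{a})=0$ whenever there are $i,j$ with $x_i=x_j$ and $a_i\ne a_j$. A system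 is feasible if it has a rational solution; $L\in\{\mathrm{BLP},\mathrm{SA}^1\}$ decides $\mathrm{CSP}(\mathbf{A})$ if for every $\sigma$-structure $\mathbf{X}$, feasibility of $L(\mathbf{X},\mathbf{A})$ implies $\mathbf{X}\to\mathbf{A}$. A $k$-ary polymorphism of $\mathbf{A}$ is $f:A^k\to A$ such that applying $f$ coordinatewise to any $k$ tuples of $R^\mathbf{A}$ gives a tuple of $R^\mathbf{A}$, for all $R\in\sigma$; it is symmetric if $f(a_1,\dots,a_k)=f(a_{\rho(1)},\dots,a_{\rho(k)})$ for all permutations $\rho$ of $[k]$. ''Of all arities'' means for every $k\ge1$. *)

From HB Require Import structures.
From mathcomp Require Import all_boot all_order all_algebra all_fingroup.
Set Implicit Arguments. Unset Strict Implicit. Unset Printing Implicit Defensive.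
Import Order.TTheory GRing.Theory Num.Theory.

Record signature := Signature {
  sym :> finType;
  ar : sym -> nat;
  ar_pos : forall R : sym, 0 < ar R }.

Record structure (s : signature) := Structure {
  univ : finType;
  rel : forall R : s, {set (ar R).-tuple univ};
  rel_ne : forall R : s, rel R != set0 }.

Section Defs.
Variable s : signature.

Definition homto (X A : structure s) : Prop :=
  exists h : univ X -> univ A,
    forall (R : s) (x : (ar R).-tuple (univ X)),
      x \in rel X R -> map_tuple h x \in rel A R.

Definition cons (X : structure s) : finType :=
  {c : {R : s & (ar R).-tuple (univ X)} | tagged c \in rel X (tag c)}.

Definition csym (X : structure s) (c : cons X) : s := tag (val c).
Definition ctup (X : structure s) (c : cons X) : (ar (csym c)).-tuple (univ X) :=
  tagged (val c).

(** Factor graph of X: vertices X + C_X, edges {a, R(a)} for a in {a},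
    labelled ({i | a_i = a}, R). *)
Definition vert (X : structure s) : finType := (univ X + cons X)%type.

Definition label : finType := {R : s & {set 'I_(ar R)}}.

Definition adj (X : structure s) (v w : vert X) : bool :=
  match v, w with
  | inl a, inr c => a \in (ctup c : seq _)
  | inr c, inl a => a \in (ctup c : seq _)
  | _, _ => false
  end.

Definition edge_label (X : structure s) (a : univ X) (c : cons X) : label :=
  @Tagged s (csym c) (fun R => {set 'I_(ar R)}) [set i | tnth (ctup c) i == a].

Definition lab (X : structure s) (v w : vert X) : option label :=
  match v, w with
  | inl a, inr c => Some (edge_label a c)
  | inr c, inl a => Some (edge_label a c)
  | _, _ => None
  end.

(** [deq j v w] holds iff delta_j^X(v) = delta_j^Y(w).  Equality of the
    multisets defining delta_j is expressed (literally) as the existence of a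
    bijection between the neighbourhoods of v and w matching edge labels and
    delta_{j-1}-values. *)
Fixpoint deq (X Y : structure s) (j : nat) (v : vert X) (w : vert Y) : Prop :=
  match j with
  | 0 => is_inl v = is_inl w
  | j'.+1 =>
      exists f : {u : vert X | adj v u} -> {u : vert Y | adj w u},
        bijective f /\
        forall u, lab v (val u) = lab w (val (f u)) /\ deq j' (val u) (val (f u))
  end.

(** X ≡_1 Y: the multisets {{delta^X(v)}} and {{delta^Y(v)}} coincide,
    i.e. there is a bijection of factor-graph vertices preserving delta. *)
Definition equiv_1 (X Y : structure s) : Prop :=
  exists F : vert X -> vert Y, bijective F /\ forall v j, deq j v (F v).

Local Open Scope ring_scope.

Definition BLP_sol (X A : structure s)
    (p : univ X -> univ A -> rat)
    (q : forall c : cons X, (ar (csym c)).-tuple (univ A) -> rat) : Prop :=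
  [/\ forall x a, 0 <= p x a <= 1,
      forall c t, 0 <= q c t <= 1,
      forall x, \sum_(a : univ A) p x a = 1,
      forall (c : cons X) (a : univ A) (i : 'I_(ar (csym c))),
        p (tnth (ctup c) i) a = \sum_(t : (ar (csym c)).-tuple (univ A) | tnth t i == a) q c t
    & forall (c : cons X) t, t \notin rel A (csym c) -> q c t = 0].

Definition BLP_feasible (X A : structure s) : Prop :=
  exists p q, @BLP_sol X A p q.

Definition SA1_feasible (X A : structure s) : Prop :=
  exists p q, @BLP_sol X A p q /\
    forall (c : cons X) (t : (ar (csym c)).-tuple (univ A)) (i j : 'I_(ar (csym c))),
      tnth (ctup c) i = tnth (ctup c) j -> tnth t i != tnth t j -> q c t = 0.

Definition decides (L : structure s -> structure s -> Prop) (A : structure s) : Prop :=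
  forall X : structure s, L X A -> homto X A.

Definition polymorphism (A : structure s) (k : nat) (f : k.-tuple (univ A) -> univ A) : Prop :=
  forall (R : s) (ts : k.-tuple ((ar R).-tuple (univ A))),
    (forall j : 'I_k, tnth ts j \in rel A R) ->
    [tuple f [tuple tnth (tnth ts j) i | j < k] | i < ar R] \in rel A R.

Definition symmetric_fun (T : Type) (k : nat) (f : k.-tuple T -> T) : Prop :=
  forall (x : k.-tuple T) (rho : 'S_k), f x = f [tuple tnth x (rho j) | j < k].

End Defs.

(* (3) => (4): on the k-element multisets over A, relate the column multisets of any
   k tuples of a relation of A.  This structure has an evident BLP solution to A, and
   a homomorphism from it to A is a symmetric k-ary polymorphism.
   (4) => (3): clearing denominators, a rational BLP solution is a uniform average of
   N rows per constraint, each column of which rearranges one N-tuple per variable;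
   a symmetric N-ary polymorphism applied to these N-tuples is a homomorphism.
   (2) => (3): a BLP solution for X is an SA1 solution for the structure of injective
   copies of the constraints of X, and by pigeonhole a homomorphism from it to A
   restricts to one from X.
   (1) => (2): spreading the rows of an SA1 solution over N layers gives a cover of X
   mapping to A.  Any two covers of the factor graph of X are 1-equivalent, in
   particular this one and the trivial cover, which maps to A iff X does.
   (4) => (1): if X1 and X2 are 1-equivalent and h : X1 -> A, then averaging h over
   the 1-equivalence classes of X1 is a BLP solution for X2, so X2 -> A by (4) => (3).
   The averages are consistent because colour refinement stabilises, so 1-equivalent
   variables occur equally often at each position of each class of constraints. *)

From Pilot Require Import Defs.
From HB Require Import structures.
From mathcomp Require Import all_boot all_order all_algebra all_fingroup.
Import Pilot.Defs.
From Stdlib Require Import ClassicalEpsilon.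
Set Implicit Arguments. Unset Strict Implicit. Unset Printing Implicit Defensive.
Import Order.TTheory GRing.Theory Num.Theory.

Definition asbool (P : Prop) : bool := if excluded_middle_informative P then true else false.

Lemma asboolP (P : Prop) : reflect P (asbool P).
Proof. by rewrite /asbool; case: excluded_middle_informative; constructor. Qed.

Lemma inj_surj_bij (T T' : finType) (f : T -> T') :
  injective f -> (forall y, exists x, f x = y) -> bijective f.
Proof.
move=> inj_f surj_f; apply: inj_card_bij => //; rewrite -(card_codom inj_f).
by apply/subset_leq_card/subsetP => y _; have [x <-] := surj_f y; exact: codom_f.
Qed.

Lemma count_sum_mem (T : finType) (P : pred T) (u : seq T) :
  count P u = \sum_(t | P t) count_mem t u.
Proof.
elim: u => [|x u IH] /=; first by rewrite big1.
rewrite IH big_split /=; congr (_ + _); case: (boolP (P x)) => Px.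
- by rewrite (bigD1 x) //= eqxx big1 // => t /andP[_ /negbTE]; rewrite eq_sym => ->.
- by rewrite big1 // => t Pt; case: eqP => // xt; rewrite xt Pt in Px.
Qed.

Lemma tuple_of_counts (T : finType) (w : T -> nat) (N : nat) :
  \sum_t w t = N -> exists u : N.-tuple T, forall t, count_mem t u = w t.
Proof.
move=> sum_w; set u := flatten [seq nseq (w t) t | t <- enum T].
have size_u : size u == N.
  rewrite size_flatten /shape -map_comp (eq_map (g := w)) => [|t /=]; last exact: size_nseq.
  by rewrite sumnE big_map big_enum /= sum_w.
exists (Tuple size_u) => t /=; rewrite count_flatten -map_comp sumnE big_map big_enum /=.
rewrite (bigD1 t) //= count_nseq /= eqxx mul1n big1 ?addn0 // => t' /negbTE t't.
by rewrite count_nseq /= t't.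
Qed.

Lemma fiber_card_geq (I T : finType) (f : I -> T) (m : nat) :
  0 < #|T| -> m * #|T| <= #|I| -> exists y, m <= #|[set i | f i == y]|.
Proof.
move=> T_gt0 le_mI; apply/existsP; apply: contraTT le_mI; rewrite negb_exists -ltnNge.
move=> /forallP small.
have cardI : #|I| = \sum_y #|[set i | f i == y]|.
  rewrite -sum1_card (partition_big f xpredT) //=.
  by apply: eq_bigr => y _; rewrite -sum1_card; apply: eq_bigl => i; rewrite inE.
have sum_le : #|I| + #|T| <= #|T| * m.
  have -> : #|T| * m = \sum_(y : T) m by rewrite sum_nat_const.
  rewrite cardI -sum1_card -big_split /=.
  by apply: leq_sum => y _; rewrite addn1 ltnNge small.
by rewrite mulnC; apply: leq_trans sum_le; rewrite -[X in X < _]addn0 ltn_add2l.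
Qed.

Lemma nonincreasing_sets_stationary (T : finType) (E : nat -> {set T}) :
  (forall j, E j.+1 \subset E j) -> exists J, E J.+1 = E J.
Proof.
move=> decE.
have shrink n : (exists J, E J.+1 = E J) \/ #|E n| + n <= #|E 0|.
  elim: n => [|n [stat|IH]]; [by right; rewrite addn0 | by left |].
  have [|neqE] := eqVneq (E n.+1) (E n); first by left; exists n.
  right; apply: leq_trans IH; rewrite addnS ltn_add2r.
  by rewrite proper_card // properEneq neqE decE.
by case: (shrink #|E 0|.+1) => //; rewrite addnS ltnNge leq_addl.
Qed.

Lemma symmetric_fun_perm (T : eqType) k (f : k.-tuple T -> T) (u v : k.-tuple T) :
  symmetric_fun f -> perm_eq u v -> f u = f v.
Proof.
move=> sym_f /tuple_permP [r uE].
have -> : u = [tuple tnth v (r i) | i < k] by apply: val_inj.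
by rewrite -sym_f.
Qed.

Definition column (T : Type) k n (ts : k.-tuple (n.-tuple T)) (i : 'I_n) : k.-tuple T :=
  [tuple tnth (tnth ts j) i | j < k].

Lemma columnE (T : Type) k n (ts : k.-tuple (n.-tuple T)) (i : 'I_n) :
  column ts i = map_tuple (fun t => tnth t i) ts.
Proof. by apply: eq_from_tnth => j; rewrite tnth_mktuple tnth_map. Qed.

Lemma count_column (T : finType) k n (ts : k.-tuple (n.-tuple T)) i a :
  count_mem a (column ts i) = \sum_(t | tnth t i == a) count_mem t ts.
Proof. by rewrite columnE count_map count_sum_mem. Qed.

Lemma card_setI_sum (T : finType) (S : {set T}) (P : pred T) :
  #|[set x in S | P x]| = \sum_(x in S) P x.
Proof.
rewrite -sum1_card (eq_bigl (fun x => (x \in S) && P x)) => [|x]; last by rewrite inE.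
by rewrite big_mkcondr; apply: eq_bigr => x _; case: (P x).
Qed.

Lemma card_uniform_fibers (I T : finType) (S : {set I}) (B : {set T}) (g : I -> T) m (P : pred T) :
  {in S, forall i, g i \in B} -> {in B, forall b, #|[set i in S | g i == b]| = m} ->
  #|[set i in S | P (g i)]| = #|[set b in B | P b]| * m.
Proof.
move=> gS fibers; rewrite -!sum1_card (partition_big g [pred b | (b \in B) && P b]) /=; last first.
  by move=> i; rewrite inE => /andP [i_in Pi]; rewrite gS.
rewrite big_distrl /=; apply: eq_big => [b|b /andP [b_in Pb]]; first by rewrite inE.
rewrite mul1n -(fibers b b_in) -sum1_card; apply: eq_bigl => i; rewrite !inE.
by case: eqP => [->|]; rewrite ?Pb ?andbT ?andbF.
Qed.

Lemma sum_tuple_indicator (T : finType) n (u : seq T) (i : 'I_n) a x0 : size u = n ->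
  \sum_(t : n.-tuple T | tnth t i == a) (u == t :> seq T) = (nth x0 u i == a).
Proof.
move=> size_u; have size_uE : size u == n by rewrite size_u.
rewrite big_mkcond (bigD1 (Tuple size_uE)) //= big1 ?addn0.
  by rewrite eqxx (tnth_nth x0); case: (_ == a).
by move=> t /eqP ne; case: ifP => // _; case: eqP => // ut; case: ne; apply: val_inj.
Qed.

Definition mkcons (s : signature) (X : structure s) (R : s) (x : (ar R).-tuple (univ X))
    (x_in : x \in rel X R) : cons X :=
  exist (fun c : {R : s & (ar R).-tuple (univ X)} => tagged c \in rel X (tag c))
        (Tagged (fun R => (ar R).-tuple (univ X)) x) x_in.

Lemma cons_eq (s : signature) (X : structure s) (c d : cons X) :
  csym c = csym d -> (ctup c : seq _) = ctup d -> c = d.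
Proof.
case: c d => [[R x] x_in] [[R' y] y_in]; rewrite /csym /ctup /= => RR'.
by subst R' => /val_inj xy; subst y; congr exist; exact: bool_irrelevance.
Qed.

Lemma rel_congr (s : signature) (A : structure s) (R R' : s)
    (t : (ar R).-tuple (univ A)) (t' : (ar R').-tuple (univ A)) :
  R = R' -> t = t' :> seq _ -> (t \in rel A R) = (t' \in rel A R').
Proof. by move=> RR'; subst R' => /val_inj ->. Qed.

(** * Colour refinement on factor graphs *)

Section FactorGraph.
Variable s : signature.
Implicit Types X Y Z : structure s.

Lemma adj_is_inl X (v u : vert X) : adj v u -> is_inl u = ~~ is_inl v.
Proof. by case: v; case: u. Qed.

Lemma cons_has_neighbour X (c : cons X) : exists u, adj (inr c) u.
Proof. by exists (inl (tnth (ctup c) (Ordinal (ar_pos (csym c))))); exact: mem_tnth. Qed.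

Lemma deq_sym X Y j (v : vert X) (w : vert Y) : deq j v w -> deq j w v.
Proof.
elim: j v w => [|j IH] v w /=; first by move->.
case=> f [[g fK gK] Hf]; exists g; split; first by exists f.
by move=> u; have [l d] := Hf (g u); rewrite gK in l d; split; [rewrite l | exact: IH].
Qed.

Lemma deq_trans X Y Z j (u : vert X) (v : vert Y) (w : vert Z) :
  deq j u v -> deq j v w -> deq j u w.
Proof.
elim: j u v w => [|j IH] u v w /=; first by move=> -> ->.
case=> f [bij_f Hf] [g [bij_g Hg]]; exists (g \o f); split; first exact: bij_comp.
move=> x; have [l1 d1] := Hf x; have [l2 d2] := Hg (f x).
by split; [rewrite l1 l2 | exact: IH d1 d2].
Qed.

Lemma deq_is_inl X Y j (v : vert X) (w : vert Y) : deq j v w -> is_inl v = is_inl w.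
Proof.
elim: j v w => [|j IH] v w //= [f [[g fK gK] Hf]].
case: v w f g fK gK Hf => [x|c] [y|d] // f g fK gK Hf.
- have [u adj_u] := cons_has_neighbour d.
  have [_ /IH] := Hf (g (exist _ u adj_u)); rewrite gK /=.
  by rewrite (adj_is_inl (valP (g _))) (adj_is_inl adj_u).
- have [u adj_u] := cons_has_neighbour c.
  have [_ /IH] := Hf (exist _ u adj_u).
  by rewrite (adj_is_inl (valP (f _))) (adj_is_inl adj_u).
Qed.

Lemma deq_succ X Y j (v : vert X) (w : vert Y) : deq j.+1 v w -> deq j v w.
Proof.
elim: j v w => [|j IH] v w; first exact: deq_is_inl.
case=> f [bij_f Hf]; exists f; split=> // u.
by have [l d] := Hf u; split; last exact: IH.
Qed.

Lemma deq_leq X Y j j' (v : vert X) (w : vert Y) : j <= j' -> deq j' v w -> deq j v w.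
Proof. by move=> /subnK <-; elim: (j' - j) => [|k IH] //= /deq_succ. Qed.

Definition factor_cover X Y (pi : vert Y -> vert X) :=
  [/\ forall v, is_inl (pi v) = is_inl v,
      forall v u, adj v u -> adj (pi v) (pi u) /\ lab (pi v) (pi u) = lab v u,
      forall v u u', adj v u -> adj v u' -> pi u = pi u' -> u = u'
    & forall v w, adj (pi v) w -> exists2 u, adj v u & pi u = w].

Lemma factor_cover_deq X Y (pi : vert Y -> vert X) :
  factor_cover pi -> forall j v, deq j v (pi v).
Proof.
case=> pi_inl pi_adj pi_inj pi_lift; elim=> [|j IH] v /=; first by rewrite pi_inl.
pose f (u : {u | adj v u}) : {w | adj (pi v) w} :=
  exist _ (pi (val u)) (proj1 (pi_adj v _ (valP u))).
exists f; split=> [|[u adj_u] /=]; last by rewrite (proj2 (pi_adj v u adj_u)).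
apply: inj_surj_bij => [[u adj_u] [u' adj_u'] /(congr1 val) /= piE|[w adj_w]].
  by apply: val_inj; exact: pi_inj adj_u adj_u' piE.
by have [u adj_u uE] := pi_lift _ _ adj_w; exists (exist _ u adj_u); apply: val_inj.
Qed.

Lemma equiv_1_common_cover X Y1 Y2 (pi1 : vert Y1 -> vert X) (pi2 : vert Y2 -> vert X)
    (F : vert Y1 -> vert Y2) :
  factor_cover pi1 -> factor_cover pi2 -> bijective F -> (forall v, pi2 (F v) = pi1 v) ->
  equiv_1 Y1 Y2.
Proof.
move=> cov1 cov2 bij_F FE; exists F; split=> // v j.
by apply: deq_trans (factor_cover_deq cov1 j v) _; rewrite -FE; apply/deq_sym/factor_cover_deq.
Qed.

Lemma equiv_1_sym X Y : equiv_1 X Y -> equiv_1 Y X.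
Proof.
case=> F [[G FK GK] FE]; exists G; split; first by exists F.
by move=> v j; apply: deq_sym; rewrite -{2}(GK v).
Qed.

Definition deq_all X Y (v : vert X) (w : vert Y) : Prop := forall j, deq j v w.

Lemma deq_all_sym X Y (v : vert X) (w : vert Y) : deq_all v w -> deq_all w v.
Proof. by move=> vw j; apply: deq_sym. Qed.

Lemma deq_all_trans X Y Z (u : vert X) (v : vert Y) (w : vert Z) :
  deq_all u v -> deq_all v w -> deq_all u w.
Proof. by move=> uv vw j; apply: deq_trans (uv j) (vw j). Qed.

Lemma deq_succ_congr X Y j j' :
  (forall (v : vert X) (w : vert Y), deq j v w <-> deq j' v w) ->
  forall (v : vert X) (w : vert Y), deq j.+1 v w <-> deq j'.+1 v w.
Proof.
by move=> jj' v w; split=> -[f [bij_f Hf]]; exists f; split=> // u;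
  have [l d] := Hf u; split=> //; apply/jj'.
Qed.

(* The relations deq j form a decreasing chain of subsets of a finite set; once two
   consecutive ones agree, deq_succ_congr propagates the equality. *)
Lemma deq_stationary Y :
  exists J, forall v w : vert Y, deq J v w -> deq_all v w.
Proof.
pose E j := [set vw : vert Y * vert Y | asbool (deq j vw.1 vw.2)].
have EP j v w : reflect (deq j v w) ((v, w) \in E j) by rewrite inE; exact: asboolP.
have [J EJ] : exists J, E J.+1 = E J.
  apply: nonincreasing_sets_stationary => j; apply/subsetP => -[v w] /EP vw.
  exact/EP/deq_succ.
have EJm m : E (J + m) = E J.
  elim: m => [|m IH]; first by rewrite addn0.
  have iffJ (v w : vert Y) : deq (J + m) v w <-> deq J v w.
    by split=> vw; apply/EP; [rewrite -IH | rewrite IH]; exact/EP.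
  rewrite addnS -EJ; apply/setP => -[v w].
  by have [to from] := deq_succ_congr iffJ v w; apply/EP/EP.
exists J => v w vw j; have [le_jJ|/ltnW/subnK <-] := leqP j J; first exact: deq_leq vw.
by apply/EP; rewrite addnC EJm; apply/EP.
Qed.

Lemma deq_all_neighbours Y (v v' : vert Y) : deq_all v v' ->
  exists f : {u | adj v u} -> {u | adj v' u}, bijective f /\
    forall u, lab v (val u) = lab v' (val (f u)) /\ deq_all (val u) (val (f u)).
Proof.
have [J stat] := deq_stationary Y => vv'; have [f [bij_f Hf]] := vv' J.+1.
by exists f; split=> // u; have [l d] := Hf u; split=> //; exact: stat.
Qed.

Lemma edge_labelE X (x : univ X) (c : cons X) n x0 :
  [exists i in tagged (edge_label x c), val i == n] =
  (n < ar (csym c)) && (nth x0 (ctup c) n == x).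
Proof.
apply/existsP/andP => [[i /andP [xi /eqP <-]]|[lt_n xn]].
  by split; [exact: ltn_ord | move: xi; rewrite inE (tnth_nth x0)].
by exists (Ordinal lt_n); rewrite /= inE (tnth_nth x0) xn eqxx.
Qed.

Lemma edge_label_eq X Y (x : univ X) (c : cons X) (y : univ Y) (d : cons Y) :
  edge_label x c = edge_label y d ->
  csym c = csym d /\ forall n x0 y0,
    (n < ar (csym c)) && (nth x0 (ctup c) n == x) = (n < ar (csym d)) && (nth y0 (ctup d) n == y).
Proof. by move=> E; split=> [|n x0 y0]; [exact: (congr1 tag E) | rewrite -!edge_labelE E]. Qed.

Lemma deq_all_cons X Y (c : cons X) (d : cons Y) :
  deq_all (inr c) (inr d) -> csym c = csym d /\
  forall n x0 y0, n < ar (csym c) ->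
    deq_all (inl (nth x0 (ctup c) n)) (inl (nth y0 (ctup d) n)).
Proof.
move=> cd; split=> [|n x0 y0 lt_n j].
  have [f [_ Hf]] := cd 1; set x := tnth (ctup c) (Ordinal (ar_pos (csym c))).
  have [+ _] := Hf (exist (fun u => adj (inr c) u) (inl x) (mem_tnth _ _)).
  case: (f _) => -[y|d'] /= _ // l.
  by have [] := edge_label_eq (congr1 (odflt (edge_label x c)) l).
have [g [_ Hg]] := cd j.+1; set x := nth x0 (ctup c) n.
have adj_x : adj (inr c) (inl x) by rewrite /= mem_nth // size_tuple.
have [+ +] := Hg (exist (fun u => adj (inr c) u) _ adj_x).
case: (g _) => -[y|d'] /= _ // l.
have [_ /(_ n x0 y0)] := edge_label_eq (congr1 (odflt (edge_label x c)) l).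
by rewrite lt_n eqxx /= => /esym /andP [_ /eqP ->].
Qed.

End FactorGraph.

(** * Integral form of BLP solutions *)

Section IntegralBLP.
Local Open Scope ring_scope.

Definition nat_scale (r : rat) (N : nat) : nat := `|numq (r * N%:R)|%N.

Lemma nat_scaleE (r : rat) (N : nat) :
  0 <= r -> (`|denq r| %| N)%N -> (nat_scale r N)%:R = r * N%:R.
Proof.
move=> r_ge0 /dvdnP [m ->]; rewrite /nat_scale.
have -> : r * (m * `|denq r|)%N%:R = (numq r * m%:Z)%:~R.
  rewrite natrM mulrC -mulrA (mulrC _ r) natr_absz gtr0_norm ?denq_gt0 //.
  by rewrite -numqE rmorphM /= mulrC.
by rewrite numq_int natr_absz ger0_norm // mulr_ge0 // numq_ge0.
Qed.

Lemma dvdn_prod (I : finType) (F : I -> nat) i : (F i %| \prod_i F i)%N.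
Proof. by rewrite (bigD1 i) //= dvdn_mulr. Qed.

Variable s : signature.
Variables X A : structure s.

Lemma BLP_sol_support p q (c : cons X) t :
  @BLP_sol s X A p q -> q c t != 0 -> t \in rel A (csym c).
Proof. by case=> _ _ _ _ q0; apply: contraR => /q0 ->. Qed.

Lemma BLP_sol_nat_weights p q : @BLP_sol s X A p q ->
  exists N (wp : univ X -> univ A -> nat)
    (wq : forall c : cons X, (ar (csym c)).-tuple (univ A) -> nat),
  [/\ (0 < N)%N, forall x, (\sum_a wp x a)%N = N, forall c, (\sum_t wq c t)%N = N,
      forall c a i, wp (tnth (ctup c) i) a = (\sum_(t | tnth t i == a) wq c t)%N
    & forall c t, wq c t != 0%N -> q c t != 0].
Proof.
case=> p01 q01 p_sum q_marg _.
pose N := ((\prod_x \prod_a `|denq (p x a)|) * (\prod_c \prod_t `|denq (q c t)|))%N.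
have N_gt0 : (0 < N)%N.
  by rewrite muln_gt0 !prodn_gt0 // => i; rewrite prodn_gt0 // => j; rewrite absz_gt0 denq_neq0.
have pE x a : (nat_scale (p x a) N)%:R = p x a * N%:R.
  apply: nat_scaleE; first by case/andP: (p01 x a).
  apply: dvdn_mulr; apply: dvdn_trans (dvdn_prod _ x).
  exact: (dvdn_prod (fun a => `|denq (p x a)|%N)).
have qE c t : (nat_scale (q c t) N)%:R = q c t * N%:R.
  apply: nat_scaleE; first by case/andP: (q01 c t).
  apply: dvdn_mull; apply: dvdn_trans (dvdn_prod _ c).
  exact: (dvdn_prod (fun t => `|denq (q c t)|%N)).
have p_sumN x : (\sum_a nat_scale (p x a) N)%N = N.
  apply/eqP; rewrite -(eqr_nat rat) natr_sum (eq_bigr _ (fun a _ => pE x a)).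
  by rewrite -mulr_suml p_sum mul1r.
have q_margN c a i :
    nat_scale (p (tnth (ctup c) i) a) N = (\sum_(t | tnth t i == a) nat_scale (q c t) N)%N.
  apply/eqP; rewrite -(eqr_nat rat) natr_sum (eq_bigr _ (fun t _ => qE c t)).
  by rewrite pE -mulr_suml q_marg.
exists N, (fun x a => nat_scale (p x a) N), (fun c t => nat_scale (q c t) N); split=> //.
- move=> c; set i0 := Ordinal (ar_pos (csym c)).
  rewrite -[RHS](p_sumN (tnth (ctup c) i0)) (partition_big (fun t => tnth t i0) xpredT) //=.
  by apply: eq_bigr => a _; rewrite q_margN.
- by move=> c t; apply: contra_neq => q0; apply/eqP; rewrite -(eqr_nat rat) qE q0 mul0r.
Qed.

(* A rational solution is the uniform average of N rows per constraint, the i-th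
   column of which rearranges one N-tuple [T x] attached to the variable x. *)
Lemma BLP_sol_tuples p q : @BLP_sol s X A p q ->
  exists N (T : univ X -> N.-tuple (univ A))
    (W : forall c : cons X, N.-tuple ((ar (csym c)).-tuple (univ A))),
  [/\ (0 < N)%N, forall c j, q c (tnth (W c) j) != 0
    & forall c i, perm_eq (column (W c) i) (T (tnth (ctup c) i))].
Proof.
move=> /BLP_sol_nat_weights [N [wp [wq [N_gt0 p_sum q_sum q_marg q_pos]]]].
have exT x : exists u : N.-tuple (univ A), [forall a, count_mem a u == wp x a].
  by have [u uE] := tuple_of_counts (p_sum x); exists u; apply/forallP => a; rewrite uE.
have exW c : exists u : N.-tuple _, [forall t, count_mem t u == wq c t].
  by have [u uE] := tuple_of_counts (q_sum c); exists u; apply/forallP => t; rewrite uE.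
have TE x a : count_mem a (xchoose (exT x)) = wp x a.
  exact/eqP/(forallP (xchooseP (exT x))).
have WE c t : count_mem t (xchoose (exW c)) = wq c t.
  exact/eqP/(forallP (xchooseP (exW c))).
exists N, (fun x => xchoose (exT x)), (fun c => xchoose (exW c)); split=> // [c j|c i].
  by apply: q_pos; rewrite -WE -lt0n -has_count has_pred1 mem_tnth.
apply/allP => a _ /=; rewrite TE count_column q_marg.
by apply/eqP/eq_bigr => t _; rewrite WE.
Qed.

End IntegralBLP.

Lemma BLP_decides_of_symmetric (s : signature) (A : structure s) :
  (forall k, 0 < k ->
     exists f : k.-tuple (univ A) -> univ A, polymorphism f /\ symmetric_fun f) ->
  decides (@BLP_feasible s) A.
Proof.
move=> sym_pol X [p [q sol]].
have [N [T [W [N_gt0 W_pos W_col]]]] := BLP_sol_tuples sol.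
have [f [pol_f sym_f]] := sym_pol N N_gt0.
exists (fun x => f (T x)) => R x x_in.
pose c := mkcons x_in.
have -> : map_tuple (fun x => f (T x)) x = [tuple f (column (W c) i) | i < ar R].
  apply: eq_from_tnth => i; rewrite tnth_map tnth_mktuple.
  by apply: symmetric_fun_perm; rewrite // perm_sym (W_col c).
by apply: pol_f => j; apply: BLP_sol_support sol (W_pos c j).
Qed.

(** * Symmetric polymorphisms from BLP *)

Section MultisetPower.
Variable s : signature.
Variable A : structure s.
Variable k : nat.
Hypothesis k_gt0 : 0 < k.

Definition kmset := {m : {ffun univ A -> 'I_k.+1} | \sum_a (m a : nat) == k}.

Lemma count_mem_ltn (T : eqType) (u : k.-tuple T) a : count_mem a u < k.+1.
Proof. by rewrite ltnS -{2}(size_tuple u) count_size. Qed.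

Lemma kmset_of_subproof (u : k.-tuple (univ A)) :
  \sum_a (([ffun a => inord (count_mem a u)] : {ffun univ A -> 'I_k.+1}) a : nat) == k.
Proof.
rewrite -[X in _ == X](size_tuple u) -(count_predT u) count_sum_mem.
by apply/eqP/eq_bigr => a _; rewrite ffunE inordK // count_mem_ltn.
Qed.

Definition kmset_of (u : k.-tuple (univ A)) : kmset :=
  exist (fun m : {ffun univ A -> 'I_k.+1} => \sum_a (m a : nat) == k) _ (kmset_of_subproof u).

Lemma kmset_ofE u a : (val (kmset_of u) a : nat) = count_mem a u.
Proof. by rewrite /= ffunE inordK // count_mem_ltn. Qed.

Definition good_rows (R : s) : {set k.-tuple ((ar R).-tuple (univ A))} :=
  [set ts | [forall j, tnth ts j \in rel A R]].

Definition column_msets (R : s) (ts : k.-tuple ((ar R).-tuple (univ A))) : (ar R).-tuple kmset :=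
  [tuple kmset_of (column ts i) | i < ar R].

Definition power_rel (R : s) : {set (ar R).-tuple kmset} :=
  [set column_msets ts | ts in good_rows R].

Lemma power_rel_neq0 R : power_rel R != set0.
Proof.
have /set0Pn [r r_in] := rel_ne A R; apply/set0Pn; exists (column_msets [tuple r | j < k]).
by apply: imset_f; rewrite inE; apply/forallP => j; rewrite tnth_mktuple.
Qed.

Definition power : structure s := Structure power_rel_neq0.

Local Open Scope ring_scope.

(* A multiset is its own distribution; a constraint is spread uniformly over the k rows
   it was built from. *)
Lemma power_BLP_feasible : BLP_feasible power A.
Proof.
have exW (c : cons power) :
    exists ts, (ts \in good_rows (csym c)) && (ctup c == column_msets ts).
  by have /imsetP [ts ts_in tsE] := valP c; exists ts; rewrite ts_in /ctup tsE eqxx.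
pose W c := xchoose (exW c).
have W_good c : W c \in good_rows (csym c) by case/andP: (xchooseP (exW c)).
have WE c : ctup c = column_msets (W c) by case/andP: (xchooseP (exW c)) => _ /eqP.
have k_neq0 : (k%:R : rat) != 0 by rewrite pnatr_eq0 -lt0n.
have frac_01 n : (n <= k)%N -> 0 <= (n%:R / k%:R : rat) <= 1.
  by move=> le_nk; rewrite divr_ge0 ?ler0n //= ler_pdivrMr ?ltr0n // mul1r ler_nat.
exists (fun (m : kmset) a => (val m a : nat)%:R / k%:R).
exists (fun c t => (count_mem t (W c))%:R / k%:R); split.
- by move=> m a; apply: frac_01; rewrite -ltnS.
- by move=> c t; apply: frac_01; rewrite -ltnS count_mem_ltn.
- by move=> m; rewrite -mulr_suml -natr_sum (eqP (valP m)) divff.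
- move=> c a i; rewrite -mulr_suml -natr_sum WE tnth_mktuple kmset_ofE count_column.
  by congr (_%:R / _); apply: eq_bigl.
- move=> c t t_notin; apply/eqP; rewrite mulf_eq0 pnatr_eq0 -/(nat_of_bool _) /=.
  apply/orP; left; apply/eqP/count_memPn; apply: contra t_notin => /tnthP [j ->].
  by move: (W_good c); rewrite inE => /forallP.
Qed.

End MultisetPower.

Lemma symmetric_of_BLP_decides (s : signature) (A : structure s) :
  decides (@BLP_feasible s) A ->
  forall k, 0 < k -> exists f : k.-tuple (univ A) -> univ A, polymorphism f /\ symmetric_fun f.
Proof.
move=> BLP_dec k k_gt0; have [h hom_h] := BLP_dec _ (power_BLP_feasible A k_gt0).
exists (fun u => h (kmset_of u)); split=> [R ts ts_in | u r].
  have := hom_h R (column_msets ts) (imset_f _ _).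
  have -> : map_tuple h (column_msets ts) = [tuple h (kmset_of (column ts i)) | i < ar R].
    by apply: eq_from_tnth => i; rewrite tnth_map !tnth_mktuple.
  by apply; rewrite inE; apply/forallP.
congr h; apply/val_inj/ffunP => a /=; rewrite !ffunE; congr inord.
have /seq.permP -> // : perm_eq [tuple tnth u (r j) | j < k] u.
by apply/tuple_permP; exists r.
Qed.

(** * From SA1 to BLP *)

Section Copies.
Variable s : signature.
Variable X : structure s.
Variable L : nat.
Hypothesis ar_leqL : forall R : s, ar R <= L.

Definition copies_rel (R : s) : {set (ar R).-tuple (univ X * 'I_L)} :=
  [set t : (ar R).-tuple (univ X * 'I_L) | uniq t && (map_tuple fst t \in rel X R)].

Lemma copies_rel_neq0 R : copies_rel R != set0.
Proof.
have /set0Pn [x x_in] := rel_ne X R.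
apply/set0Pn; exists [tuple (tnth x i, widen_ord (ar_leqL R) i) | i < ar R].
rewrite inE; apply/andP; split.
  by apply/tuple_uniqP => i j; rewrite !tnth_mktuple => -[_ /val_inj].
suff -> : map_tuple fst [tuple (tnth x i, widen_ord (ar_leqL R) i) | i < ar R] = x by [].
by apply: eq_from_tnth => i; rewrite tnth_map tnth_mktuple.
Qed.

Definition copies : structure s := Structure copies_rel_neq0.

Lemma copies_cons_proj (c : cons copies) : map_tuple fst (ctup c) \in rel X (csym c).
Proof. by have := valP c; rewrite inE => /andP []. Qed.

(* The SA1 condition holds vacuously: constraint tuples of [copies] have distinct entries. *)
Lemma copies_SA1_feasible (A : structure s) : BLP_feasible X A -> SA1_feasible copies A.
Proof.
case=> p [q [p01 q01 p_sum q_marg q0]].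
exists (fun xl a => p xl.1 a), (fun c t => q (mkcons (copies_cons_proj c)) t); split.
  split=> // [c a i | c t t_notin]; last exact: q0.
  by have := q_marg (mkcons (copies_cons_proj c)) a i; rewrite /= tnth_map.
move=> c t i j cij; have := valP c; rewrite inE => /andP [/tuple_uniqP uniq_c _].
by rewrite (uniq_c i j cij) eqxx.
Qed.

Lemma hom_of_copies_fibers (A : structure s) (h : univ X * 'I_L -> univ A) (v : univ X -> univ A) :
  (forall (R : s) t, t \in rel copies R -> map_tuple h t \in rel A R) ->
  (forall (R : s) x, ar R <= #|[set l | h (x, l) == v x]|) -> homto X A.
Proof.
move=> hom_h big_fibers; exists v => R x x_in.
pose S y := enum [set l | h (y, l) == v y].
have size_S y : ar R <= size (S y) by rewrite -cardE; exact: big_fibers.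
pose l0 : 'I_L := widen_ord (ar_leqL R) (Ordinal (ar_pos R)).
pose t := [tuple (tnth x i, nth l0 (S (tnth x i)) i) | i < ar R].
have t_in : t \in rel copies R.
  rewrite inE; apply/andP; split.
    apply/tuple_uniqP => i j; rewrite !tnth_mktuple => -[xij].
    rewrite xij => /eqP; rewrite nth_uniq ?enum_uniq ?(leq_trans (ltn_ord _) (size_S _)) //.
    by move/eqP/val_inj.
  suff -> : map_tuple fst t = x by [].
  by apply: eq_from_tnth => i; rewrite tnth_map tnth_mktuple.
suff <- : map_tuple h t = map_tuple v x by exact: hom_h.
apply: eq_from_tnth => i; rewrite !tnth_map tnth_ord_tuple; apply/eqP.
have : nth l0 (S (tnth x i)) i \in S (tnth x i).
  by rewrite mem_nth // (leq_trans (ltn_ord i) (size_S _)).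
by rewrite mem_enum inE.
Qed.

End Copies.

Definition arity_sum (s : signature) : nat := \sum_(R : s) ar R.

Lemma ar_leq_arity_sum (s : signature) (R : s) : ar R <= arity_sum s.
Proof. by rewrite /arity_sum (bigD1 R) //= leq_addr. Qed.

Lemma BLP_decides_of_SA1 (s : signature) (A : structure s) :
  decides (@SA1_feasible s) A -> decides (@BLP_feasible s) A.
Proof.
move=> SA1_dec X BLP_X; have [a0 _ | A0] := pickP (univ A); last first.
  have X0 (x : univ X) : False.
    case: BLP_X => p [q [_ _ p_sum _ _]].
    by move: (p_sum x); rewrite big_pred0 // => /esym/eqP; rewrite oner_eq0.
  by exists (fun x => match X0 x with end) => R x; case: (X0 (tnth x (Ordinal (ar_pos R)))).
have A_gt0 : 0 < #|univ A| by apply/card_gt0P; exists a0.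
pose L := (arity_sum s * #|univ A|)%N.
have ar_leqL (R : s) : ar R <= L.
  by rewrite /L; apply: leq_trans (ar_leq_arity_sum R) (leq_pmulr _ A_gt0).
have [h hom_h] := SA1_dec _ (copies_SA1_feasible ar_leqL BLP_X).
have fibers x : exists a, arity_sum s <= #|[set l | h (x, l) == a]|.
  by apply: fiber_card_geq; rewrite // card_ord.
apply: (hom_of_copies_fibers (v := fun x => xchoose (fibers x)) hom_h) => R x.
exact: leq_trans (ar_leq_arity_sum R) (xchooseP (fibers x)).
Qed.

(** * Covers, and from 1-invariance to SA1 *)

Section Cover.
Variable s : signature.
Variable X : structure s.
Variable N : nat.
Hypothesis N_gt0 : 0 < N.

(* The constraint R(x) has the N lifts [lift_tuple x k], sending an entry y of x to the
   copy (y, sg x y k).  Keying the permutation on the entry rather than on its position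
   keeps repeated entries of x on a common copy. *)
Variable sg : forall R : s, (ar R).-tuple (univ X) -> univ X -> {perm 'I_N}.

Definition lift_tuple (R : s) (x : (ar R).-tuple (univ X)) (k : 'I_N) :
    (ar R).-tuple (univ X * 'I_N) :=
  map_tuple (fun y => (y, sg x y k)) x.

Definition cover_rel (R : s) : {set (ar R).-tuple (univ X * 'I_N)} :=
  [set lift_tuple x k | x in rel X R, k in 'I_N].

Lemma lift_tuple_fst R x k : map_tuple fst (@lift_tuple R x k) = x.
Proof. by apply: eq_from_tnth => i; rewrite !tnth_map. Qed.

Lemma lift_tuple_inj R x : injective (@lift_tuple R x).
Proof.
move=> k k' /(congr1 (fun t => tnth t (Ordinal (ar_pos R)))).
by rewrite !tnth_map => -[/perm_inj].
Qed.

Lemma mem_lift_tuple R x k y l : ((y, l) \in @lift_tuple R x k) = (y \in x) && (l == sg x y k).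
Proof. by apply/mapP/andP => [[z z_in [-> ->]] // | [y_in /eqP ->]]; exists y. Qed.

Lemma lift_tuple_in_cover_rel R x k : x \in rel X R -> @lift_tuple R x k \in cover_rel R.
Proof. by move=> x_in; apply: imset2_f. Qed.

Lemma cover_relP R t : t \in cover_rel R ->
  map_tuple fst t \in rel X R /\ exists k, t == lift_tuple (map_tuple fst t) k.
Proof. by case/imset2P => x k x_in _ ->; rewrite lift_tuple_fst; split=> //; exists k. Qed.

Lemma cover_rel_neq0 R : cover_rel R != set0.
Proof.
have /set0Pn [x x_in] := rel_ne X R.
by apply/set0Pn; exists (lift_tuple x (Ordinal N_gt0)); apply: lift_tuple_in_cover_rel.
Qed.

Definition perm_cover : structure s := Structure cover_rel_neq0.

Definition cover_proj (d : cons perm_cover) : cons X :=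
  mkcons (proj1 (cover_relP (valP d))).

Definition layer (d : cons perm_cover) : 'I_N := xchoose (proj2 (cover_relP (valP d))).

Lemma ctup_cover (d : cons perm_cover) : ctup d = lift_tuple (ctup (cover_proj d)) (layer d).
Proof. exact/eqP/(xchooseP (proj2 (cover_relP (valP d)))). Qed.

Definition lift_cons (c : cons X) (k : 'I_N) : cons perm_cover :=
  @mkcons s perm_cover (csym c) (lift_tuple (ctup c) k) (lift_tuple_in_cover_rel k (valP c)).

Lemma cover_proj_lift_cons c k : cover_proj (lift_cons c k) = c.
Proof. by apply: cons_eq => //; exact: (congr1 val (lift_tuple_fst (ctup c) k)). Qed.

Lemma layer_lift_cons c k : layer (lift_cons c k) = k.
Proof.
have E := ctup_cover (lift_cons c k).
change (lift_tuple (ctup c) k =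
        lift_tuple (map_tuple fst (lift_tuple (ctup c) k)) (layer (lift_cons c k))) in E.
by move: E; rewrite lift_tuple_fst => /lift_tuple_inj.
Qed.

Lemma lift_cons_layer d : lift_cons (cover_proj d) (layer d) = d.
Proof. by apply: cons_eq => //; rewrite [in RHS]ctup_cover. Qed.

Lemma layer_of_mem (d : cons perm_cover) y l :
  (y, l) \in ctup d -> l = sg (ctup (cover_proj d)) y (layer d).
Proof. by rewrite {1}ctup_cover mem_lift_tuple => /andP [_ /eqP]. Qed.

Definition cover_map (v : vert perm_cover) : vert X :=
  match v with inl yl => inl yl.1 | inr d => inr (cover_proj d) end.

Lemma cover_map_incidence (d : cons perm_cover) y l : (y, l) \in ctup d ->
  adj (inl y) (inr (cover_proj d)) /\
  edge_label y (cover_proj d) = @edge_label s perm_cover (y, l) d.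
Proof.
move=> yl_in; split; first by rewrite /= -[y]/((y, l).1) map_f.
rewrite /edge_label; congr Tagged; apply/setP => i; rewrite !inE /= tnth_map.
apply/eqP/eqP => [yi|-> //]; rewrite (layer_of_mem yl_in) {1}ctup_cover tnth_map /= -yi.
by congr (_, _); rewrite tnth_map.
Qed.

Lemma cover_map_factor_cover : factor_cover cover_map.
Proof.
split=> [[]// | | |].
- by move=> [[y l]|d] [[y' l']|d'] //= adj_vu; have [? ->] := cover_map_incidence adj_vu.
- move=> [[y l]|d] [[y1 l1]|d1] [[y2 l2]|d2] //= adj1 adj2; last first.
    by move=> [y12]; rewrite (layer_of_mem adj1) (layer_of_mem adj2) y12.
  move=> /(congr1 (fun v : vert X => if v is inr c then c else cover_proj d1)) /= proj12.
  rewrite -(lift_cons_layer d1) -(lift_cons_layer d2) proj12.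
  by move: (layer_of_mem adj1) (layer_of_mem adj2); rewrite proj12 => -> /perm_inj ->.
- move=> [[y l]|d] [y'|c] //= adj_vw.
    exists (inr (lift_cons c ((sg (ctup c) y)^-1 l)%g)); last by rewrite /= cover_proj_lift_cons.
    by rewrite /= mem_lift_tuple adj_vw permKV eqxx.
  by case/mapP: adj_vw => -[y m] ym_in ->; exists (inl (y, m)).
Qed.

End Cover.

Lemma cover_equiv_1 (s : signature) (X : structure s) N (N_gt0 : 0 < N) sg1 sg2 :
  equiv_1 (@perm_cover s X N N_gt0 sg1) (@perm_cover s X N N_gt0 sg2).
Proof.
pose F sg sg' (v : vert (@perm_cover s X N N_gt0 sg)) : vert (@perm_cover s X N N_gt0 sg') :=
  match v with inl yl => inl yl | inr d => inr (lift_cons N_gt0 sg' (cover_proj d) (layer d)) end.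
have FK sg sg' : cancel (F sg sg') (F sg' sg).
  by case=> [yl|d] //=; rewrite cover_proj_lift_cons layer_lift_cons lift_cons_layer.
apply: (equiv_1_common_cover (cover_map_factor_cover N_gt0 sg1) (cover_map_factor_cover N_gt0 sg2)).
  by exists (F sg2 sg1).
by case=> [yl|d] //=; rewrite cover_proj_lift_cons.
Qed.

Lemma hom_of_trivial_cover (s : signature) (X A : structure s) N (N_gt0 : 0 < N) :
  homto (@perm_cover s X N N_gt0 (fun _ _ _ => 1%g)) A -> homto X A.
Proof.
case=> h hom_h; exists (fun y => h (y, Ordinal N_gt0)) => R x x_in.
suff <- : map_tuple h (lift_tuple (fun _ _ _ => 1%g) x (Ordinal N_gt0)) =
          map_tuple (fun y => h (y, Ordinal N_gt0)) x by exact/hom_h/lift_tuple_in_cover_rel.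
by apply: eq_from_tnth => i; rewrite !tnth_map perm1.
Qed.

Lemma SA1_decides_of_equiv_1_invariant (s : signature) (A : structure s) :
  (forall X1 X2 : structure s, equiv_1 X1 X2 -> (homto X1 A <-> homto X2 A)) ->
  decides (@SA1_feasible s) A.
Proof.
move=> inv X [p [q [sol SA1]]].
have [N [T [W [N_gt0 W_pos W_col]]]] := BLP_sol_tuples sol.
have exS (c : cons X) i : exists r : {perm 'I_N},
    column (W c) i == [tuple tnth (T (tnth (ctup c) i)) (r j) | j < N].
  by have /tuple_permP [r rE] := W_col c i; exists r; apply/eqP/val_inj.
pose r c i := xchoose (exS c i).
have rE c i j : tnth (tnth (W c) j) i = tnth (T (tnth (ctup c) i)) (r c i j).
  by have := congr1 (fun t => tnth t j) (eqP (xchooseP (exS c i))); rewrite !tnth_mktuple.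
pose perm_at (c : cons X) y := if [pick i | tnth (ctup c) i == y] is Some i then r c i else 1%g.
pose sg R (x : (ar R).-tuple (univ X)) y :=
  if insub (Tagged (fun R => (ar R).-tuple (univ X)) x) is Some c then perm_at c y else 1%g.
have sgE R x (x_in : x \in rel X R) i j :
    tnth (T (tnth x i)) (sg R x (tnth x i) j) = tnth (tnth (W (mkcons x_in)) j) i.
  (* SA1 makes the rows agree on repeated variables, so any occurrence of y may be used. *)
  rewrite /sg insubT /perm_at; set c := mkcons x_in.
  case: pickP => [i' /eqP xi' | /(_ i)]; last by rewrite eqxx.
  rewrite -xi' -rE; apply/eqP; apply: contraR (W_pos c j).
  by move/(SA1 c _ i' i xi') => ->.
have hom_cover : homto (perm_cover N_gt0 sg) A.
  pose h (yl : univ X * 'I_N) := tnth (T yl.1) yl.2.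
  exists h => R t /cover_relP [x_in [k /eqP ->]].
  suff -> : map_tuple h (lift_tuple sg (map_tuple fst t) k) = tnth (W (mkcons x_in)) k.
    exact: BLP_sol_support sol (W_pos (mkcons x_in) k).
  by apply: eq_from_tnth => i; rewrite tnth_map /lift_tuple tnth_map; exact: sgE.
apply: (hom_of_trivial_cover (N_gt0 := N_gt0)).
exact: (inv _ _ (cover_equiv_1 N_gt0 sg _)).1 hom_cover.
Qed.

(** * Transfer of homomorphisms along 1-equivalence *)

Section Transfer.
Variable s : signature.
Variables X1 X2 A : structure s.

(* A label-preserving bijection between the neighbourhoods of x and x' moves the
   constraints having x at position n to constraints having x' there. *)
Lemma card_incident_leq (x x' : univ X1) (S : {set cons X1}) n x0 :
  deq_all (inl x) (inl x') ->
  (forall c c', deq_all (inr c) (inr c') -> c \in S -> c' \in S) ->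
  {in S, forall c, n < ar (csym c)} ->
  #|[set c in S | nth x0 (ctup c) n == x]| <= #|[set c in S | nth x0 (ctup c) n == x']|.
Proof.
move=> xx' S_closed S_ar; have [f [bij_f f_nb]] := deq_all_neighbours xx'.
set Sx := [set c in S | _]; set Sx' := [set c in S | _].
pose phi c := if insub (inr c) : option {u | adj (inl x) u} is Some u then
  (if val (f u) is inr c' then c' else c) else c.
have phiP c : c \in Sx -> exists u : {u | adj (inl x) u},
    [/\ val u = inr c, val (f u) = inr (phi c) & phi c \in Sx'].
  rewrite inE => /andP [c_in /eqP xn]; have lt_n := S_ar c c_in.
  have adj_c : adj (inl x) (inr c) by rewrite /= -xn mem_nth ?size_tuple.
  exists (exist (fun u => adj (inl x) u) _ adj_c); rewrite /phi insubT.
  have [+ +] := f_nb (exist (fun u => adj (inl x) u) _ adj_c).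
  case: (f _) => -[//|c'] /= _ l cc'.
  split=> //; have [_ /(_ n x0 x0)] := edge_label_eq (congr1 (odflt (edge_label x c)) l).
  by rewrite lt_n xn eqxx inE => /esym /andP [_ ->]; rewrite (S_closed _ _ cc').
have phi_inj : {in Sx &, injective phi}.
  move=> c1 c2 /phiP [u1 [u1E fu1E _]] /phiP [u2 [u2E fu2E _]] phi12.
  have /(bij_inj bij_f) u12 : f u1 = f u2 by apply: val_inj; rewrite fu1E fu2E phi12.
  by move: u1E; rewrite u12 u2E => -[].
rewrite -(card_in_imset phi_inj); apply/subset_leq_card/subsetP => _ /imsetP [c c_in ->].
by have [u []] := phiP c c_in.
Qed.

Definition var_class (y : univ X2) : {set univ X1} := [set x | asbool (deq_all (inl x) (inl y))].
Definition cons_class (d : cons X2) : {set cons X1} := [set c | asbool (deq_all (inr c) (inr d))].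

Lemma var_classP y x : reflect (deq_all (inl x) (inl y)) (x \in var_class y).
Proof. by rewrite inE; exact: asboolP. Qed.

Lemma cons_classP d c : reflect (deq_all (inr c) (inr d)) (c \in cons_class d).
Proof. by rewrite inE; exact: asboolP. Qed.

Lemma cons_class_entry d c n x0 y0 : c \in cons_class d -> n < ar (csym d) ->
  n < ar (csym c) /\ nth x0 (ctup c) n \in var_class (nth y0 (ctup d) n).
Proof.
move=> /cons_classP /deq_all_cons [cdE entries] lt_n.
have lt_nc : n < ar (csym c) by rewrite cdE.
by split=> //; apply/var_classP; exact: entries.
Qed.

Lemma card_cons_class_at d n x0 y0 x x' : n < ar (csym d) ->
  x \in var_class (nth y0 (ctup d) n) -> x' \in var_class (nth y0 (ctup d) n) ->
  #|[set c in cons_class d | nth x0 (ctup c) n == x]| =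
  #|[set c in cons_class d | nth x0 (ctup c) n == x']|.
Proof.
move=> lt_n /var_classP xy /var_classP x'y.
have closed c c' : deq_all (inr c) (inr c') -> c \in cons_class d -> c' \in cons_class d.
  by move=> cc' /cons_classP cd; apply/cons_classP; exact: deq_all_trans (deq_all_sym cc') cd.
have ar_n : {in cons_class d, forall c, n < ar (csym c)}.
  by move=> c /(cons_class_entry x0 y0) /(_ lt_n) [].
apply/eqP; rewrite eqn_leq !card_incident_leq //.
  exact: deq_all_trans x'y (deq_all_sym xy).
exact: deq_all_trans xy (deq_all_sym x'y).
Qed.

Variable h : univ X1 -> univ A.

Lemma card_cons_class_marginal d (i : 'I_(ar (csym d))) a x0 :
  x0 \in var_class (tnth (ctup d) i) ->
  #|[set x in var_class (tnth (ctup d) i) | h x == a]| * #|cons_class d| =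
  (\sum_(t | tnth t i == a) #|[set c in cons_class d | map_tuple h (ctup c) == t :> seq _]|)
    * #|var_class (tnth (ctup d) i)|.
Proof.
move=> x0_in; set y := tnth _ i; set n := val i; set Y := var_class y; set C := cons_class d.
have yE : nth y (ctup d) n = y by rewrite -tnth_nth.
have entry c : c \in C -> n < ar (csym c) /\ nth x0 (ctup c) n \in Y.
  by move/(cons_class_entry (n := n) x0 y); rewrite yE; apply; exact: ltn_ord.
pose m := #|[set c in C | nth x0 (ctup c) n == x0]|.
have fibers : {in Y, forall x, #|[set c in C | nth x0 (ctup c) n == x]| = m}.
  by move=> x x_in; apply: (@card_cons_class_at d n x0 y); rewrite ?yE ?ltn_ord.
have count_C P : #|[set c in C | P (nth x0 (ctup c) n)]| = #|[set x in Y | P x]| * m.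
  by apply: card_uniform_fibers fibers => c /entry [].
have sum_C : \sum_(t | tnth t i == a) #|[set c in C | map_tuple h (ctup c) == t :> seq _]| =
             #|[set c in C | h (nth x0 (ctup c) n) == a]|.
  under eq_bigr do rewrite card_setI_sum.
  rewrite exchange_big card_setI_sum; apply: eq_bigr => c c_in; have [lt_n _] := entry c c_in.
  rewrite (sum_tuple_indicator _ _ (h x0)) /= ?(nth_map x0) ?size_tuple //.
  by have /cons_classP /deq_all_cons [cdE _] := c_in; rewrite cdE.
have card_C : #|C| = #|Y| * m.
  by have := count_C predT; rewrite !card_setI_sum /= !sum1_card.
by rewrite sum_C (count_C (fun x => h x == a)) card_C mulnA mulnAC.
Qed.

End Transfer.

Section TransferBLP.
Local Open Scope ring_scope.

Lemma frac_card_01 (T : finType) (S : {set T}) (P : pred T) :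
  (0 < #|S|)%N -> 0 <= (#|[set x in S | P x]|%:R / #|S|%:R : rat) <= 1.
Proof.
move=> S_gt0; rewrite divr_ge0 ?ler0n //= ler_pdivrMr ?ltr0n // mul1r ler_nat.
by apply/subset_leq_card/subsetP => x; rewrite inE => /andP [].
Qed.

Lemma BLP_feasible_of_equiv_1_hom (s : signature) (X1 X2 A : structure s) :
  equiv_1 X1 X2 -> homto X1 A -> BLP_feasible X2 A.
Proof.
case=> F [[G FK GK] FE] [h hom_h].
have rep w : deq_all (G w) w by move=> j; rewrite -{2}(GK w).
have Y_gt0 (y : univ X2) : (0 < #|var_class X1 y|)%N.
  have := rep (inl y); case: (G _) => [x|c] xy; last by have := deq_is_inl (xy 0).
  by apply/card_gt0P; exists x; exact/var_classP.
have C_gt0 (d : cons X2) : (0 < #|cons_class X1 d|)%N.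
  have := rep (inr d); case: (G _) => [x|c] cd; first by have := deq_is_inl (cd 0).
  by apply/card_gt0P; exists c; exact/cons_classP.
exists (fun y a => #|[set x in var_class X1 y | h x == a]|%:R / #|var_class X1 y|%:R).
exists (fun d t => #|[set c in cons_class X1 d | map_tuple h (ctup c) == t :> seq _]|%:R
                   / #|cons_class X1 d|%:R).
split=> [y a | d t | y | d a i | d t t_notin]; rewrite ?frac_card_01 //.
- have sum_class : (\sum_a #|[set x in var_class X1 y | h x == a]|)%N = #|var_class X1 y|.
    rewrite -[RHS]sum1_card (partition_big h xpredT) //=.
    by apply: eq_bigr => a _; rewrite -sum1_card; apply: eq_bigl => x; rewrite inE.
  by rewrite -mulr_suml -natr_sum sum_class divff // pnatr_eq0 -lt0n.
- have /card_gt0P [x0 x0_in] := Y_gt0 (tnth (ctup d) i).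
  rewrite -mulr_suml -natr_sum; apply/eqP.
  by rewrite eqr_div ?pnatr_eq0 -?lt0n // -!natrM eqr_nat (card_cons_class_marginal h a x0_in).
- apply/eqP; rewrite mulf_eq0 pnatr_eq0 cards_eq0; apply/orP; left.
  apply/eqP/setP => c; rewrite in_set0; apply/negbTE/negP.
  rewrite inE => /andP [/cons_classP cd /eqP ht].
  have [cdE _] := deq_all_cons cd.
  by move: t_notin; rewrite -(rel_congr cdE ht) hom_h ?(valP c).
Qed.

End TransferBLP.

Theorem theorem5p2 (s : signature) (A : structure s) :
  [<-> (forall X1 X2 : structure s, equiv_1 X1 X2 -> (homto X1 A <-> homto X2 A));
       decides (@SA1_feasible s) A;
       decides (@BLP_feasible s) A;
       (forall k : nat, 0 < k ->
          exists f : k.-tuple (univ A) -> univ A,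
            polymorphism f /\ symmetric_fun f)].
Proof.
tfae.
- exact: SA1_decides_of_equiv_1_invariant.
- exact: BLP_decides_of_SA1.
- exact: symmetric_of_BLP_decides.
- move=> sym_pol X1 X2 X1X2; have BLP_dec := BLP_decides_of_symmetric sym_pol.
  split=> hom; apply: BLP_dec; first exact: BLP_feasible_of_equiv_1_hom hom.
  exact: BLP_feasible_of_equiv_1_hom (equiv_1_sym X1X2) hom.
Qed.
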